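(* Let $A=(a_{i,k})_{0\le i,k\le d-1}\in\mathbb{Z}^{d\times d}$ be an idealizing matrix. Then for every $1\le j\le d-1$, $a_{j,j}$ divides $a_{i,k}$ for all $0\le i,k\le j$.
   Context: An idealizing matrix is an upper triangular integer matrix $A=(a_{i,k})_{0\le i,k\le d-1}$ with nonzero diagonal entries such that, for each $0\le j\le d-2$, the vector obtained by shifting the $j$-th column down by one, namely $(0,a_{0,j},a_{1,j},\dots,a_{d-2,j})^T$, lies in the $\mathbb{Z}$-span of columns $0,1,\dots,j+1$ of $A$. (Columns are indexed from $0$; the $j$-th column represents the coefficient vector of a polynomial of degree $j$.) *)

From HB Require Import structures.
From mathcomp Require Import all_boot all_order all_algebra.
Set Implicit Arguments. Unset Strict Implicit. Unset Printing Implicit Defensive.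
Import Order.TTheory GRing.Theory Num.Theory.
Local Open Scope ring_scope.

(* An idealizing matrix: A : 'M[int]_d, indices 0..d-1 ('I_d).
   - upper triangular: A i k = 0 when k < i;
   - nonzero diagonal;
   - for every column j with j <= d-2, the column shifted down by one,
     s = (0, A 0 j, ..., A (d-2) j)^T, lies in the Z-span of columns
     0..j+1: there are integer coefficients c k (zero for k > j+1) with
     s i = \sum_k c k * A i k for every row i. *)
Definition idealizing (d : nat) (A : 'M[int]_d) : Prop :=
  [/\ (forall i k : 'I_d, (k < i)%N -> A i k = 0),
      (forall i : 'I_d, A i i != 0) &
      (forall j : 'I_d, (j.+2 <= d)%N ->
         exists c : 'I_d -> int,
           (forall k : 'I_d, (j.+1 < k)%N -> c k = 0) /\
           (forall i : 'I_d, nat_of_ord i = 0%N ->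
               \sum_(k < d) c k * A i k = 0) /\
           (forall i i' : 'I_d, nat_of_ord i = i'.+1 ->
               \sum_(k < d) c k * A i k = A i' j))].

From HB Require Import structures.
From mathcomp Require Import all_boot all_order all_algebra.
Import Order.TTheory GRing.Theory Num.Theory.
Local Open Scope ring_scope.

(* Let c be the coefficients expressing the shifted column j
   through columns 0..j+1. By triangularity, row j+1 of this relation reads
   a_{j,j} = c_{j+1} a_{j+1,j+1}, so a_{j+1,j+1} divides a_{j,j} and hence all
   entries of columns 0..j. In every other row i it reads
   c_{j+1} a_{i,j+1} = a_{i-1,j} - sum_{k <= j} c_k a_{i,k}, whose right-hand
   side is a multiple of a_{j,j} = c_{j+1} a_{j+1,j+1}; cancelling the nonzero
   c_{j+1} gives a_{j+1,j+1} | a_{i,j+1}. *)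

Section IdealizingDivisibility.

Variables (d : nat) (A : 'M[int]_d).
Hypothesis A_triu : forall i k : 'I_d, (k < i)%N -> A i k = 0.
Hypothesis A_diag : forall i : 'I_d, A i i != 0.

Section ColumnRelation.

Variables (j m : 'I_d) (c : 'I_d -> int).
Hypothesis m_succ : val m = j.+1.
Hypothesis c_supp : forall k : 'I_d, (j.+1 < k)%N -> c k = 0.
Hypothesis c_row0 : forall i : 'I_d, val i = 0%N -> \sum_(k < d) c k * A i k = 0.
Hypothesis c_shift : forall i i' : 'I_d, val i = i'.+1 ->
  \sum_(k < d) c k * A i k = A i' j.

Lemma column_relation_split (i : 'I_d) :
  \sum_(k < d) c k * A i k =
    c m * A i m + \sum_(k < d | (k <= j)%N) c k * A i k.
Proof.
rewrite (bigID (fun k : 'I_d => (k <= j)%N)) /= addrC; congr (_ + _).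
rewrite (bigD1 m) /= ?m_succ ?ltnn // big1 ?addr0 // => k /andP [kNj km].
rewrite c_supp ?mul0r // ltn_neqAle ltnNge kNj andbT -m_succ.
by rewrite eq_sym.
Qed.

Lemma column_relation_diag : A j j = c m * A m m.
Proof.
rewrite -(c_shift _ _ m_succ) column_relation_split big1 ?addr0 // => k kj.
by rewrite A_triu ?mulr0 // m_succ ltnS.
Qed.

Lemma dvdz_diag_succ :
    (forall i k : 'I_d, (k <= j)%N -> (A j j %| A i k)%Z) ->
  forall i k : 'I_d, (k <= m)%N -> (A m m %| A i k)%Z.
Proof.
move=> dvd_jj i k km.
have [kj|jk] := leqP k j.
  by apply: dvdz_trans (dvd_jj i k kj); rewrite column_relation_diag dvdz_mull.
have -> : k = m by apply/val_inj/eqP; rewrite eqn_leq km m_succ jk.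
have cm_neq0 : c m != 0.
  by apply: contra (A_diag j); rewrite column_relation_diag => /eqP->; rewrite mul0r.
rewrite -(dvdz_mul2l cm_neq0) -column_relation_diag.
have dvd_low : (A j j %| \sum_(k < d | (k <= j)%N) c k * A i k)%Z.
  by apply: rpred_sum => k' k'j; rewrite dvdz_mull ?dvd_jj.
have dvd_all : (A j j %| \sum_(k < d) c k * A i k)%Z.
  case Ei: (val i) => [|i']; first by rewrite c_row0 ?dvdz0.
  have i'_lt_d : (i' < d)%N by apply: ltnW; rewrite -Ei ltn_ord.
  by rewrite (c_shift _ (Ordinal i'_lt_d)) ?dvd_jj.
by rewrite -(addrK (\sum_(k < d | (k <= j)%N) c k * A i k) (c m * A i m))
  -column_relation_split rpredB.
Qed.

End ColumnRelation.

Hypothesis A_shift : forall j : 'I_d, (j.+2 <= d)%N ->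
  exists c : 'I_d -> int,
    (forall k : 'I_d, (j.+1 < k)%N -> c k = 0) /\
    (forall i : 'I_d, nat_of_ord i = 0%N -> \sum_(k < d) c k * A i k = 0) /\
    (forall i i' : 'I_d, nat_of_ord i = i'.+1 ->
       \sum_(k < d) c k * A i k = A i' j).

Lemma dvdz_diag (j i k : 'I_d) : (k <= j)%N -> (A j j %| A i k)%Z.
Proof.
move: j i k; suff dvd_n : forall n (j : 'I_d), val j = n ->
    forall i k : 'I_d, (k <= j)%N -> (A j j %| A i k)%Z.
  by move=> j; apply: dvd_n.
elim=> [|n IH] j jn i k.
  rewrite jn leqn0 => /eqP k0.
  have -> : k = j by apply: val_inj; rewrite /= k0 jn.
  have [i0|i_gt0] := posnP i; last by rewrite A_triu ?dvdz0 // jn.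
  by have -> : i = j by apply: val_inj; rewrite /= i0 jn.
have n_lt_d : (n < d)%N by apply: ltnW; rewrite -jn ltn_ord.
have [|c [c_supp [c_row0 c_shift]]] := A_shift (Ordinal n_lt_d).
  by rewrite /= -jn ltn_ord.
exact (dvdz_diag_succ (Ordinal n_lt_d) j c jn c_supp c_row0 c_shift
  (IH (Ordinal n_lt_d) erefl) i k).
Qed.

End IdealizingDivisibility.

Theorem mainTheorem5 (d : nat) (A : 'M[int]_d) :
  idealizing A ->
  forall j : 'I_d, (1 <= j)%N ->
  forall i k : 'I_d, (i <= j)%N -> (k <= j)%N -> (A j j %| A i k)%Z.
Proof.
by case=> A_triu A_diag A_shift j _ i k _; apply: dvdz_diag.
Qed.
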